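(* Let $m\geq 1$, $n\geq 3$ and $p\geq 2$ be integers, and let $i,j\in V$. There exists a walk of length $pn-1$ from $i$ to $j$ in $D^m_n$ if and only if there exists a walk of length $n-1$ from $i$ to $j$ in $D^m_n$. In such cases, the number of walks of length $pn-1$ from $i$ to $j$ in $D^m_n$ is exactly $m^{p-1}$.
   Context: For integers $m\geq 1$, $n\geq 3$, the oriented Dutch windmill graph $D^m_n$ is the directed graph with vertex set $V=\{1,2,\ldots,m(n-1)+1\}$ whose directed edges $(a,b)$ are exactly: $(1,(k-1)(n-1)+2)$ for $k\in\{1,\ldots,m\}$; $((k-1)(n-1)+i,(k-1)(n-1)+i+1)$ for $k\in\{1,\ldots,m\}$ and $i\in\{2,\ldots,n-1\}$; and $((k-1)(n-1)+n,1)$ for $k\in\{1,\ldots,m\}$. A walk is a sequence of vertices $\langle v_1,\ldots,v_r\rangle$ in which each $(v_t,v_{t+1})$ is an edge; its length is $r-1$; walks are distinct when they are distinct sequences. *)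

(* Oriented Dutch windmill graph D^m_n on vertices 1..m(n-1)+1. *)
From mathcomp Require Import all_boot.
Set Implicit Arguments. Unset Strict Implicit. Unset Printing Implicit Defensive.

Definition inV (m n v : nat) : bool := (1 <= v) && (v <= m * (n - 1) + 1).

(* directed edges; the paper's blade index k in {1..m} is k.+1 for k : 'I_m,
   so (k-1) of the paper is k here *)
Definition dw_edge (m n : nat) (a b : nat) : bool :=
  [|| [exists k : 'I_m, (a == 1) && (b == k * (n - 1) + 2)],
      [exists k : 'I_m, exists i : 'I_n,
          [&& 2 <= i, i <= n - 1, a == k * (n - 1) + i & b == k * (n - 1) + i + 1]]
    | [exists k : 'I_m, (a == k * (n - 1) + n) && (b == 1)]].

Definition is_walk (m n L i j : nat) (s : seq nat) : bool :=
  match s with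
  | [::] => false
  | x :: t => [&& size s == L.+1, all (inV m n) s, x == i,
                 last x t == j & path (dw_edge m n) x t]
  end.

(* number of distinct walks of length L from i to j; walks are sequences of
   vertices, enumerated as tuples over 'I_(m(n-1)+2) (which contains V) *)
Definition nwalks (m n L i j : nat) : nat :=
  #|[set t : (L.+1).-tuple 'I_(m * (n - 1) + 2) | is_walk m n L i j (map val t)]|.

From mathcomp Require Import all_boot zify.
Set Implicit Arguments. Unset Strict Implicit. Unset Printing Implicit Defensive.

(* Every vertex other than the hub 1 has a single out-neighbour, so from the
   vertex at position r of a blade all walks go to the hub in n - 1 - r steps,
   while the hub has the m first vertices of the blades as out-neighbours.
   Writing W_L(a) for the number of walks of length L from a to j, this gives
   W_{L+n}(1) = m W_L(1), hence W_{pn-1}(i) = m^{p-1} W_{n-1}(i). A walk of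
   length at most n - 1 from the hub never returns to it, so it is determined
   by the blade it enters: W_{n-1}(i) <= 1. *)

Lemma big_tuple_cons (T : finType) L (F : L.+1.-tuple T -> nat) :
  \sum_(t : L.+1.-tuple T) F t = \sum_(x : T) \sum_(t : L.-tuple T) F [tuple of x :: t].
Proof.
rewrite pair_big /= (reindex (fun p : T * L.-tuple T => [tuple of p.1 :: p.2])) //=.
exists (fun t : L.+1.-tuple T => (thead t, [tuple of behead t])).
  by move=> [x t] _; congr pair; apply: val_inj.
by move=> t _; rewrite [RHS]tuple_eta.
Qed.

Section Walks.

Variables (N : nat) (V : pred nat) (e : rel nat).
Hypothesis V_lt : forall v, V v -> v < N.

(* [is_walk m n] unfolds to [walkb (inV m n) (dw_edge m n)]. *)
Definition walkb (L i j : nat) (s : seq nat) : bool :=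
  match s with
  | [::] => false
  | x :: t => [&& size s == L.+1, all V s, x == i, last x t == j & path e x t]
  end.

Definition walk_count L i j := \sum_(t : L.-tuple 'I_N) walkb L i j (i :: map val t).

Lemma walk_count0 i j : walk_count 0 i j = V i && (i == j).
Proof.
rewrite /walk_count (eq_bigr (fun=> nat_of_bool (V i && (i == j)))) => [|t _].
  by rewrite sum_nat_const card_tuple expn0 mul1n.
by rewrite tuple0 /= eqxx !andbT.
Qed.

Lemma walkb_cons2 L i j x y s :
  walkb L.+1 i j [:: x, y & s] = [&& x == i, V x, e x y & walkb L y j (y :: s)].
Proof.
rewrite /= eqxx eqSS.
by case: (size s == L); case: (x == i); case: (V x); case: (V y); case: (e x y);
   rewrite /= ?andbF.
Qed.

Lemma walk_countS L i j :
  walk_count L.+1 i j = \sum_(y < N) (V i && e i y) * walk_count L y j.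
Proof.
rewrite /walk_count big_tuple_cons; apply: eq_bigr => y _.
rewrite big_distrr; apply: eq_bigr => t _.
by rewrite [map _ _]/= walkb_cons2 eqxx; case: (V i); case: (e i y); rewrite /= ?mul1n.
Qed.

Lemma walk_count_out L i j s :
  V i -> uniq s -> all V s -> (forall y, e i y = (y \in s)) ->
  walk_count L.+1 i j = \sum_(y <- s) walk_count L y j.
Proof.
move=> Vi s_uniq sV e_s; rewrite walk_countS.
transitivity (\sum_(0 <= y < N | y \in s) walk_count L y j).
  rewrite [RHS]big_mkord [RHS]big_mkcond; apply: eq_bigr => y _.
  by rewrite Vi e_s; case: ifP => _; rewrite /= ?mul1n.
rewrite -big_filter; apply/perm_big/uniq_perm => [||y];
  rewrite ?filter_uniq ?iota_uniq //.
rewrite mem_filter mem_index_iota; case s_y: (y \in s) => //.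
by rewrite (V_lt (allP sV y s_y)).
Qed.

Lemma card_walks L i j : i < N ->
  #|[set t : L.+1.-tuple 'I_N | walkb L i j (map val t)]| = walk_count L i j.
Proof.
move=> i_lt; rewrite -sum1_card big_mkcond big_tuple_cons /=.
rewrite (bigD1 (Ordinal i_lt)) //= [X in _ + X]big1 ?addn0 => [|y y_ne_i].
  by apply: eq_bigr => t _; rewrite inE.
have /negbTE y_i : val y != i by apply: contra y_ne_i => /eqP y_i; apply/eqP/val_inj.
by apply: big1 => t _; rewrite inE /= y_i !andbF.
Qed.

Lemma walk_count_gt0 L i j : i < N ->
  (exists s, walkb L i j s) <-> 0 < walk_count L i j.
Proof.
move=> i_lt; rewrite -card_walks // card_gt0; split=> [[s walk_s] | /set0Pn [t]].
  have s_lt : all (fun v => v < N) s.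
    by case: s walk_s => // x t /and5P [_ sV _ _ _]; apply: sub_all sV => v /V_lt.
  have size_s : size (map (insubd (Ordinal i_lt)) s) == L.+1.
    by case: s walk_s s_lt => // x t /andP [size_s _]; rewrite size_map.
  apply/set0Pn; exists (Tuple size_s); rewrite inE /= -map_comp map_id_in // => v v_s.
  exact/insubdK/(allP s_lt).
by rewrite inE => walk_t; exists (map val t).
Qed.

End Walks.

(* The vertex [r + 1] steps after the hub on blade [k], for [r < n - 1]. *)
Definition blade n k r := k * (n - 1) + r + 2.

Lemma inV_hub m n : inV m n 1.
Proof. by rewrite /inV leqnn leq_addl. Qed.

Lemma inV_blade m n k r : k < m -> r < n - 1 -> inV m n (blade n k r).
Proof. by rewrite /inV /blade; nia. Qed.

Lemma inV_lt m n v : inV m n v -> v < m * (n - 1) + 2.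
Proof. by case/andP=> _ v_le; rewrite addnS ltnS. Qed.

Section Windmill.

Variables m n : nat.
Hypothesis n_gt1 : 1 < n.

Lemma blade_inj k k' r r' : r < n - 1 -> r' < n - 1 ->
  blade n k r = blade n k' r' -> k = k' /\ r = r'.
Proof.
move=> r_lt r'_lt /eqP; rewrite /blade eqn_add2r => /eqP eq_kr.
have := congr1 (modn^~ (n - 1)) eq_kr; rewrite !modnMDl !modn_small // => r_eq.
have := congr1 (divn^~ (n - 1)) eq_kr; rewrite !divnMDl ?divn_small ?addn0 //; lia.
Qed.

Variant vertex_spec : nat -> Prop :=
  | VertexHub : vertex_spec 1
  | VertexBlade k r of k < m & r < n - 1 : vertex_spec (blade n k r).

Lemma vertexP a : inV m n a -> vertex_spec a.
Proof.
case/andP=> a_gt0 a_le; have [-> | a_ne1] := eqVneq a 1; first exact: VertexHub.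
have -> : a = blade n ((a - 2) %/ (n - 1)) ((a - 2) %% (n - 1)).
  by rewrite /blade -divn_eq; lia.
by apply: VertexBlade; [rewrite ltn_divLR; nia | rewrite ltn_mod; lia].
Qed.

Lemma dw_edge_hub b : dw_edge m n 1 b = (b \in [seq blade n k 0 | k <- iota 0 m]).
Proof.
apply/idP/mapP => [|[k]]; last first.
  rewrite mem_iota add0n => /andP [_ k_lt] ->; apply/orP; left; apply/existsP.
  by exists (Ordinal k_lt); rewrite /blade addn0 /= !eqxx.
case/or3P => [/existsP [k /andP [_ /eqP ->]] | | ].
- by exists (val k); rewrite ?mem_iota ?add0n ?ltn_ord /blade ?addn0.
- by case/existsP=> k /existsP [i /and4P [i_ge2 _ /eqP hub _]]; nia.
- by case/existsP=> k /andP [/eqP hub _]; nia.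
Qed.

Lemma dw_edge_blade k r b : k < m -> r.+1 < n - 1 ->
  dw_edge m n (blade n k r) b = (b == blade n k r.+1).
Proof.
move=> k_lt r_lt; apply/idP/eqP => [|->]; last first.
  have r2_lt : r + 2 < n by lia.
  apply/orP; right; apply/orP; left; apply/existsP; exists (Ordinal k_lt).
  by apply/existsP; exists (Ordinal r2_lt); rewrite /blade /=; apply/and4P; split; lia.
case/or3P => [/existsP [k' /andP [/eqP hub _]] | | ].
- by move: hub; rewrite /blade addn2.
- case/existsP=> k' /existsP [i /and4P [i_ge2 i_le /eqP src /eqP ->]].
  have [-> ->] : k = k' /\ r = i - 2.
    by apply: blade_inj; rewrite // ?src /blade; lia.
  by rewrite /blade; lia.
- case/existsP=> k' /andP [/eqP src _].
  have [_ r_eq] : k = k' /\ r = n - 2.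
    by apply: blade_inj; rewrite // ?src /blade; lia.
  lia.
Qed.

Lemma dw_edge_blade_last k b : k < m ->
  dw_edge m n (blade n k (n - 2)) b = (b == 1).
Proof.
move=> k_lt; apply/idP/eqP => [|->]; last first.
  apply/orP; right; apply/orP; right; apply/existsP; exists (Ordinal k_lt).
  by rewrite /blade /=; apply/andP; split; lia.
case/or3P => [/existsP [k' /andP [/eqP hub _]] | | ].
- by move: hub; rewrite /blade addn2.
- case/existsP=> k' /existsP [i /and4P [i_ge2 i_le /eqP src _]].
  have [_ r_eq] : k = k' /\ n - 2 = i - 2.
    by apply: blade_inj; rewrite // ?src /blade; lia.
  lia.
- by case/existsP=> k' /andP [_ /eqP].
Qed.

Variable j : nat.

Local Notation W L a :=
  (walk_count (m * (n - 1) + 2) (inV m n) (dw_edge m n) L a j).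

Lemma walk_count_hub L : W L.+1 1 = \sum_(k < m) W L (blade n k 0).
Proof.
have blade0_inj : injective (blade n ^~ 0).
  by move=> k k' /blade_inj [] //; lia.
rewrite (@walk_count_out _ _ _ (@inV_lt m n) L 1 j [seq blade n k 0 | k <- iota 0 m]).
- by rewrite big_map -(big_mkord xpredT (fun k => W L (blade n k 0))) /index_iota subn0.
- exact: inV_hub.
- by rewrite map_inj_uniq ?iota_uniq.
- apply/allP=> b /mapP [k]; rewrite mem_iota => /andP [_ k_lt] ->.
  by apply: inV_blade; lia.
- exact: dw_edge_hub.
Qed.

Lemma walk_count_blade k r L : k < m -> r.+1 < n - 1 ->
  W L.+1 (blade n k r) = W L (blade n k r.+1).
Proof.
move=> k_lt r_lt.
rewrite (@walk_count_out _ _ _ (@inV_lt m n) L _ j [:: blade n k r.+1]) ?big_seq1 //.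
- by apply: inV_blade; lia.
- by rewrite /= andbT; apply: inV_blade; lia.
- by move=> b; rewrite dw_edge_blade // inE.
Qed.

Lemma walk_count_blade_last k L : k < m ->
  W L.+1 (blade n k (n - 2)) = W L 1.
Proof.
move=> k_lt; rewrite (@walk_count_out _ _ _ (@inV_lt m n) L _ j [:: 1]) ?big_seq1 //.
- by apply: inV_blade; lia.
- by rewrite /= andbT inV_hub.
- by move=> b; rewrite dw_edge_blade_last // inE.
Qed.

Lemma walk_count_blade_hub k r L : k < m -> r < n - 1 ->
  W (L + (n - 1 - r)) (blade n k r) = W L 1.
Proof.
move=> k_lt r_lt; rewrite (_ : n - 1 - r = (n - 2 - r).+1); last by lia.
have : r + (n - 2 - r) = n - 2 by lia.
move: (n - 2 - r) => d; elim: d r {r_lt} => [|d IH] r r_d.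
  by move: r_d; rewrite addn0 addn1 => ->; rewrite walk_count_blade_last.
by rewrite [L + _]addnS walk_count_blade ?IH //; lia.
Qed.

Lemma walk_count_blade_pred k r : k < m -> r < n - 1 ->
  W (n - 1) (blade n k r) = W r 1.
Proof.
by move=> k_lt r_lt; rewrite -(walk_count_blade_hub _ k_lt r_lt) subnKC // ltnW.
Qed.

Lemma walk_count_hub_period L : W (L + n) 1 = m * W L 1.
Proof.
rewrite (_ : L + n = (L + (n - 1 - 0)).+1); last by lia.
rewrite walk_count_hub (eq_bigr (fun _ => W L 1)) => [|k _].
  by rewrite sum_nat_const card_ord.
by apply: walk_count_blade_hub; [exact: ltn_ord | lia].
Qed.

Lemma walk_count_hub_periodM q L : W (q * n + L) 1 = m ^ q * W L 1.
Proof.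
elim: q => [|q IH]; first by rewrite mul0n expn0 mul1n.
by rewrite mulSnr addnAC walk_count_hub_period IH expnS mulnA.
Qed.

Lemma walk_count_blade_short k r L : k < m -> r + L < n - 1 ->
  W L (blade n k r) = (blade n k (r + L) == j).
Proof.
move=> k_lt; elim: L r => [|L IH] r rL.
  by rewrite walk_count0 inV_blade ?addn0 //; lia.
by rewrite walk_count_blade ?IH ?addSnnS //; lia.
Qed.

Lemma walk_count_hub_le1 L : L <= n - 1 -> W L 1 <= 1.
Proof.
case: L => [|L] L_lt; first by rewrite walk_count0 leq_b1.
rewrite walk_count_hub (eq_bigr (fun k : 'I_m => nat_of_bool (blade n k L == j))).
  rewrite -big_mkcond sum1_card; apply/card_le1_eqP => k k' /eqP k_j /eqP k'_j.
  apply/val_inj; have [] := blade_inj L_lt L_lt (etrans k'_j (esym k_j)) => //.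
by move=> k _; rewrite walk_count_blade_short ?add0n //; lia.
Qed.

Lemma walk_count_period p i : inV m n i -> W (p.+1 * n - 1) i = m ^ p * W (n - 1) i.
Proof.
case/vertexP => [|k r k_lt r_lt].
  by rewrite (_ : p.+1 * n - 1 = p * n + (n - 1)) ?walk_count_hub_periodM //; nia.
rewrite walk_count_blade_pred //.
rewrite (_ : p.+1 * n - 1 = (p * n + r) + (n - 1 - r)); last by nia.
by rewrite walk_count_blade_hub // walk_count_hub_periodM.
Qed.

Lemma walk_count_le1 i : inV m n i -> W (n - 1) i <= 1.
Proof.
case/vertexP => [|k r k_lt r_lt]; first exact: walk_count_hub_le1.
by rewrite walk_count_blade_pred // walk_count_hub_le1 // ltnW.
Qed.

End Windmill.

Theorem lemma2p6 (m n p i j : nat) :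
  1 <= m -> 3 <= n -> 2 <= p -> inV m n i -> inV m n j ->
  ((exists s : seq nat, is_walk m n (p * n - 1) i j s) <->
   (exists s : seq nat, is_walk m n (n - 1) i j s)) /\
  ((exists s : seq nat, is_walk m n (n - 1) i j s) ->
   nwalks m n (p * n - 1) i j = m ^ (p - 1)).
Proof.
move=> m_gt0 n_gt2 p_gt1 i_V _; have n_gt1 : 1 < n by lia.
have walk_gt0 L : (exists s, is_walk m n L i j s) <->
    0 < walk_count (m * (n - 1) + 2) (inV m n) (dw_edge m n) L i j.
  exact (walk_count_gt0 (dw_edge m n) (@inV_lt m n) L j (inV_lt i_V)).
case: p p_gt1 => // p _; rewrite subSS subn0.
have period := walk_count_period n_gt1 j p i_V.
split; first by rewrite !walk_gt0 period muln_gt0 expn_gt0 m_gt0.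
move=> /walk_gt0 walk_pos; rewrite /nwalks card_walks ?inV_lt // period.
by rewrite [walk_count _ _ _ (n - 1) i j](@anti_leq _ 1) ?muln1 // walk_count_le1.
Qed.
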